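(* Let $(X,d)$ be a compact doubling metric space with $\operatorname{diam}(X,d)=1/2$ and $\mathcal S$ a hyperbolic filling with parameters $a\ge\lambda\ge6$. Let $\rho:\mathcal S\to(0,\infty)$ satisfy (H1) and (H4) (exponent $p$). Let $C>1$, let $\mu_k$ be a $(C,\pi)$-balanced probability mass function on $\mathcal S_k$, and let $f_0:\mathcal S_{k+1}\to(0,1]$ be a probability mass function such that $(\mu_k,f_0)$ is $(C,\pi)$-compatible. Let $e=\{w_1,w_1'\}$ be a horizontal edge in $\mathcal S_{k+1}$ on which $f_0$ is $(C,\pi)$-unbalanced. If $e'=\{w,w'\}$ is a horizontal edge in $\mathcal S_{k+1}$ on which $f_0$ is $(C,\pi)$-balanced, then $B^e_{k+1}(f_0)$ is also $(C,\pi)$-balanced on $e'$.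
   Context: Hyperbolic filling: $X_0\subset X_1\subset\cdots$ increasing, $X_n$ maximal $a^{-n}$-separated in $X$ ($X_0=\{x_0\}$); $\mathcal S_n=\{(x,n):x\in X_n\}$, $\mathcal S=\bigcup_n\mathcal S_n$, $v_0=(x_0,0)$. Each $(x,n)$, $n\ge1$, has a fixed parent $(y,n-1)$ with $d(x,y)=\min_{z\in X_{n-1}}d(x,z)$; $\mathcal D_n(v)$ = descendants of $v$ in $\mathcal S_n$; genealogy $g(v)=(v_0,\dots,v_k=v)$. $D_2$: graph distance for the graph with edges vertex–parent and horizontal edges between distinct $(x,n),(y,n)$ with $B(x,\lambda a^{-n})\cap B(y,\lambda a^{-n})\ne\emptyset$. $\pi(v)=\prod_{w\in g(v)}\rho(w)$. (H1) $0<\eta_-\le\rho\le\eta_+<1$. (H4) $\sum_{w\in\mathcal D_n(v)}\pi(w)^p\le\pi(v)^p$ for all $v\in\mathcal S_m$, $n>m$. $f:\mathcal S_k\to(0,\infty)$ is $(C,\pi)$-balanced if $f(u)/\pi(u)^p\le C^2f(v)/\pi(v)^p$ for all $u,v\in\mathcal S_k$ with $D_2(u,v)=1$; it is $(C,\pi)$-balanced on an edge $\{u,v\}$ if $C^{-2}f(v)/\pi(v)^p\le f(u)/\pi(u)^p\le C^2f(v)/\pi(v)^p$, and $(C,\pi)$-unbalanced on it otherwise. $(f_0,f_1)$ is $(C,\pi)$-compatible if $f_0(u)/\pi(u)^p\le f_1(v)/\pi(v)^p\le Cf_0(u)/\pi(u)^p$ whenever $u$ is the parent of $v$. Balancing operator: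 for a horizontal edge $e=\{u,v\}$ in $\mathcal S_j$ and $f:\mathcal S_j\to(0,\infty)$, $B^e_j(f)=f$ if $f$ is balanced on $e$; if $f(u)/\pi(u)^p>C^2f(v)/\pi(v)^p$, then $B^e_j(f)$ agrees with $f$ off $\{u,v\}$ and equals $f(u)-\alpha$ at $u$, $f(v)+\alpha$ at $v$, with $\alpha(C^2/\pi(v)^p+1/\pi(u)^p)=f(u)/\pi(u)^p-C^2f(v)/\pi(v)^p$; symmetrically if $f(v)/\pi(v)^p>C^2f(u)/\pi(u)^p$. *)

From Stdlib Require Import Reals Lra List ClassicalEpsilon.
Import ListNotations.
Open Scope R_scope.

Section Filling.
Variable X : Type.
Variable d : X -> X -> R.

Definition is_metric : Prop :=
  (forall x y, 0 <= d x y) /\ (forall x y, d x y = 0 <-> x = y) /\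
  (forall x y, d x y = d y x) /\ (forall x y z, d x z <= d x y + d y z).

Definition ball (x : X) (r : R) (z : X) : Prop := d x z < r.

Definition metric_open (U : X -> Prop) : Prop :=
  forall x, U x -> exists r, 0 < r /\ forall z, ball x r z -> U z.

Definition metric_compact : Prop :=
  forall (I : Type) (U : I -> X -> Prop),
    (forall i, metric_open (U i)) -> (forall x, exists i, U i x) ->
    exists l : list I, forall x, exists i, In i l /\ U i x.

Definition doubling : Prop :=
  exists N : nat, forall x r, 0 < r ->
    exists l : list X, (length l <= N)%nat /\
      forall z, ball x r z -> exists y, In y l /\ ball y (r / 2) z.

Definition diam_eq (D : R) : Prop :=
  is_lub (fun r => exists x y, r = d x y) D.

Definition separated (r : R) (A : X -> Prop) : Prop :=
  forall x y, A x -> A y -> x <> y -> r <= d x y.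

Definition maximal_separated (r : R) (A : X -> Prop) : Prop :=
  separated r A /\
  forall B : X -> Prop, (forall x, A x -> B x) -> separated r B ->
    forall x, B x -> A x.

(* Hyperbolic filling data: level sets Xs n (vertex (x,n) <-> Xs n x),
   root x0, and parent map: the parent of (x,n+1) is (par x (n+1), n). *)
Definition hyperbolic_filling (a : R) (Xs : nat -> X -> Prop) (x0 : X)
    (par : X -> nat -> X) : Prop :=
  (forall x, Xs 0%nat x <-> x = x0) /\
  (forall n x, Xs n x -> Xs (S n) x) /\
  (forall n, maximal_separated (/ a ^ n) (Xs n)) /\
  (forall n x, Xs (S n) x ->
     Xs n (par x (S n)) /\ forall z, Xs n z -> d x (par x (S n)) <= d x z).

Definition hedge (a lam : R) (Xs : nat -> X -> Prop) (n : nat) (x y : X) : Prop :=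
  Xs n x /\ Xs n y /\ x <> y /\
  exists z, ball x (lam / a ^ n) z /\ ball y (lam / a ^ n) z.

Definition adj2 (a lam : R) (Xs : nat -> X -> Prop) (par : X -> nat -> X)
    (u v : X * nat) : Prop :=
  let (x, n) := u in let (y, m) := v in
  (m = S n /\ Xs m y /\ Xs n x /\ par y m = x) \/
  (n = S m /\ Xs n x /\ Xs m y /\ par x n = y) \/
  (n = m /\ hedge a lam Xs n x y).

(* D_2(u,v) = 1 : u, v distinct and adjacent *)
Definition D2_eq1 a lam Xs par (u v : X * nat) : Prop :=
  u <> v /\ adj2 a lam Xs par u v.

Fixpoint anc (par : X -> nat -> X) (x : X) (n m : nat) : X :=
  match n with
  | O => x
  | S n' => if Nat.leb (S n') m then x else anc par (par x (S n')) n' m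
  end.

Fixpoint pi (rho : X -> nat -> R) (par : X -> nat -> X) (x : X) (n : nat) : R :=
  match n with
  | O => rho x O
  | S n' => rho x (S n') * pi rho par (par x (S n')) n'
  end.

Definition rsum (f : X -> R) (l : list X) : R := fold_right Rplus 0 (map f l).

Definition H1 (Xs : nat -> X -> Prop) (rho : X -> nat -> R) (em ep : R) : Prop :=
  0 < em /\ ep < 1 /\ forall n x, Xs n x -> em <= rho x n <= ep.

(* (H4): D_n(v) is finite; its sum of pi^p is at most pi(v)^p *)
Definition H4 (Xs : nat -> X -> Prop) (rho : X -> nat -> R) (par : X -> nat -> X)
    (p : R) : Prop :=
  forall m n y, Xs m y -> (m < n)%nat ->
    exists l : list X, NoDup l /\
      (forall x, In x l <-> (Xs n x /\ anc par x n m = y)) /\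
      rsum (fun x => Rpower (pi rho par x n) p) l <= Rpower (pi rho par y m) p.

Definition pmf (Xs : nat -> X -> Prop) (n : nat) (f : X -> R) : Prop :=
  (forall x, Xs n x -> 0 < f x) /\
  exists l : list X, NoDup l /\ (forall x, In x l <-> Xs n x) /\ rsum f l = 1.

Definition Fn (rho : X -> nat -> R) (par : X -> nat -> X) (p : R) (n : nat)
    (f : X -> R) (x : X) : R := f x / Rpower (pi rho par x n) p.

Definition balanced a lam Xs par rho p (C : R) (n : nat) (f : X -> R) : Prop :=
  forall u v, Xs n u -> Xs n v -> D2_eq1 a lam Xs par (u, n) (v, n) ->
    Fn rho par p n f u <= C ^ 2 * Fn rho par p n f v.

Definition balanced_on rho par p (C : R) (n : nat) (f : X -> R) (u v : X) : Prop :=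
  / C ^ 2 * Fn rho par p n f v <= Fn rho par p n f u <= C ^ 2 * Fn rho par p n f v.

Definition compatible Xs rho par p (C : R) (k : nat) (f0 f1 : X -> R) : Prop :=
  forall v, Xs (S k) v ->
    Fn rho par p k f0 (par v (S k)) <= Fn rho par p (S k) f1 v <=
    C * Fn rho par p k f0 (par v (S k)).

Definition Xeq (x y : X) : bool :=
  if excluded_middle_informative (x = y) then true else false.

Definition shift (f : X -> R) (u v : X) (al : R) : X -> R :=
  fun z => if Xeq z u then f u - al else if Xeq z v then f v + al else f z.

Definition balance rho par p (C : R) (n : nat) (u v : X) (f : X -> R) : X -> R :=
  let Fu := Fn rho par p n f u in
  let Fv := Fn rho par p n f v in
  let Pu := Rpower (pi rho par u n) p in
  let Pv := Rpower (pi rho par v n) p in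
  if Rlt_dec (C ^ 2 * Fv) Fu then
    shift f u v ((Fu - C ^ 2 * Fv) / (C ^ 2 / Pv + / Pu))
  else if Rlt_dec (C ^ 2 * Fu) Fv then
    shift f v u ((Fv - C ^ 2 * Fu) / (C ^ 2 / Pu + / Pv))
  else f.

End Filling.

(** Balancing the unbalanced edge {u, v} moves mass from u to v, lowering
    F = f / pi^p at u and raising it at v until F(u) = C^2 F(v) exactly; every
    other vertex keeps its value.  On an edge {u, x} the new F(u) is still at
    most F(u) <= C^2 F(x), and it is not too small because vertices at
    horizontal distance two in S_(k+1) satisfy F(x) <= C^3 F(v): their parents
    coincide or are adjacent (this is where lam >= 6 enters), so the
    (C, pi)-balance of mu_k at level k lifts through compatibility with one
    extra factor C.  Edges {v, x} are handled symmetrically. *)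

From Stdlib Require Import Reals Lra Classical ClassicalEpsilon.
Open Scope R_scope.

(* [balanced_on X rho par p C n f] is convertibly [ratio_balanced C (Fn X rho par p n f)]. *)
Definition ratio_balanced {T : Type} (C : R) (F : T -> R) (x y : T) : Prop :=
  / C ^ 2 * F y <= F x <= C ^ 2 * F y.

Lemma ratio_balancedE {T : Type} (C : R) (F : T -> R) (x y : T) : 0 < C ->
  ratio_balanced C F x y <-> F y <= C ^ 2 * F x /\ F x <= C ^ 2 * F y.
Proof.
  intros HC. assert (HC2 : 0 < C ^ 2) by (apply pow_lt; exact HC).
  assert (Hscale : / C ^ 2 * F y <= F x <-> F y <= C ^ 2 * F x).
  { assert (Hy : F y = C ^ 2 * (/ C ^ 2 * F y)) by (field; lra).
    split; intros H.
    - rewrite Hy. apply Rmult_le_compat_l; lra.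
    - apply (Rmult_le_reg_l (C ^ 2)); lra. }
  unfold ratio_balanced. rewrite Hscale. tauto.
Qed.

Lemma ratio_balanced_sym {T : Type} (C : R) (F : T -> R) (x y : T) : 0 < C ->
  ratio_balanced C F x y -> ratio_balanced C F y x.
Proof. intros HC. rewrite !ratio_balancedE by exact HC. tauto. Qed.

Section MassTransfer.
Variables (T : Type) (E : T -> T -> Prop) (C : R) (F G : T -> R) (u v : T).
Hypothesis C_gt1 : 1 < C.
Hypothesis E_sym : forall x y, E x y -> E y x.
Hypothesis E_neq : forall x y, E x y -> x <> y.
Hypothesis F_nonneg : forall x y, E x y -> 0 <= F y.
Hypothesis F_two_step : forall x y z, E x y -> E y z -> F x <= C ^ 3 * F z.
Hypothesis Euv : E u v.
Hypothesis G_src : G u <= F u.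
Hypothesis G_dst : F v <= G v.
Hypothesis G_src_dst : G u = C ^ 2 * G v.
Hypothesis G_other : forall z, z <> u -> z <> v -> G z = F z.

Let C_pos : 0 < C. Proof. lra. Qed.
Let C2_ge1 : 1 <= C ^ 2. Proof. simpl; nra. Qed.
Let C3_le_C4 : C ^ 3 <= C ^ 2 * C ^ 2. Proof. simpl; nra. Qed.
Let G_dst_nonneg : 0 <= G v. Proof. pose proof (F_nonneg u v Euv). lra. Qed.

Lemma transfer_balanced_edge : ratio_balanced C G u v.
Proof.
  apply ratio_balancedE; [exact C_pos|]. split; [|lra].
  rewrite G_src_dst.
  assert (G v <= C ^ 2 * G v) by nra.
  assert (C ^ 2 * G v <= C ^ 2 * (C ^ 2 * G v)) by nra.
  lra.
Qed.

Lemma transfer_balanced_src x :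
  E u x -> ratio_balanced C F u x -> ratio_balanced C G u x.
Proof.
  intros Eux Hbal. destruct (classic (x = v)) as [->|Hxv].
  { exact transfer_balanced_edge. }
  assert (Hxu : x <> u) by (intros ->; exact (E_neq u u Eux eq_refl)).
  rewrite ratio_balancedE in * by exact C_pos.
  rewrite (G_other x Hxu Hxv).
  destruct Hbal as [Hlo Hhi]. split; [|lra].
  assert (F x <= C ^ 3 * F v) by exact (F_two_step x u v (E_sym u x Eux) Euv).
  assert (C ^ 3 * F v <= C ^ 3 * G v) by (apply Rmult_le_compat_l; simpl; nra).
  assert (C ^ 3 * G v <= C ^ 2 * C ^ 2 * G v) by (apply Rmult_le_compat_r; lra).
  rewrite G_src_dst. lra.
Qed.

Lemma transfer_balanced_dst x :
  E v x -> ratio_balanced C F v x -> ratio_balanced C G v x.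
Proof.
  intros Evx Hbal. destruct (classic (x = u)) as [->|Hxu].
  { apply ratio_balanced_sym; [exact C_pos | exact transfer_balanced_edge]. }
  assert (Hxv : x <> v) by (intros ->; exact (E_neq v v Evx eq_refl)).
  rewrite ratio_balancedE in * by exact C_pos.
  rewrite (G_other x Hxu Hxv).
  destruct Hbal as [Hlo Hhi]. split.
  { assert (C ^ 2 * F v <= C ^ 2 * G v) by (apply Rmult_le_compat_l; lra). lra. }
  pose proof (F_nonneg v x Evx) as Fx_nonneg.
  assert (Hu3 : C ^ 2 * G v <= C ^ 3 * F x).
  { rewrite <- G_src_dst. pose proof (F_two_step u v x Euv Evx). lra. }
  assert (G v <= C * F x).
  { apply (Rmult_le_reg_l (C ^ 2)); [simpl; nra|].
    replace (C ^ 2 * (C * F x)) with (C ^ 3 * F x) by ring. exact Hu3. }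
  assert (C * F x <= C ^ 2 * F x) by (apply Rmult_le_compat_r; simpl; nra).
  lra.
Qed.

Lemma transfer_preserves_balanced w w' :
  E w w' -> ratio_balanced C F w w' -> ratio_balanced C G w w'.
Proof.
  intros Eww' Hbal.
  destruct (classic (w = u)) as [->|Hwu]; [exact (transfer_balanced_src w' Eww' Hbal)|].
  destruct (classic (w = v)) as [->|Hwv]; [exact (transfer_balanced_dst w' Eww' Hbal)|].
  destruct (classic (w' = u)) as [->|Hw'u].
  { apply ratio_balanced_sym; [exact C_pos|].
    apply transfer_balanced_src; [exact (E_sym w u Eww')|].
    apply ratio_balanced_sym; [exact C_pos | exact Hbal]. }
  destruct (classic (w' = v)) as [->|Hw'v].
  { apply ratio_balanced_sym; [exact C_pos|].
    apply transfer_balanced_dst; [exact (E_sym w v Eww')|].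
    apply ratio_balanced_sym; [exact C_pos | exact Hbal]. }
  unfold ratio_balanced. rewrite !G_other by assumption. exact Hbal.
Qed.

End MassTransfer.

Lemma maximal_separated_dense (X : Type) (d : X -> X -> R) (r : R) (A : X -> Prop) (x : X) :
  is_metric X d -> 0 < r -> maximal_separated X d r A -> exists z, A z /\ d x z < r.
Proof.
  intros [_ [Hd0 [Hsym _]]] Hr [Hsep Hmax].
  apply NNPP. intros Hfar.
  assert (Hnear : forall z, A z -> r <= d x z).
  { intros z Hz. apply Rnot_lt_le. intros Hlt. apply Hfar. exists z. split; assumption. }
  assert (Hx : A x).
  { apply (Hmax (fun y => A y \/ y = x)); [now left | | now right].
    intros y1 y2 [Hy1| ->] [Hy2| ->] Hne.
    - exact (Hsep y1 y2 Hy1 Hy2 Hne).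
    - rewrite Hsym. exact (Hnear y1 Hy1).
    - exact (Hnear y2 Hy2).
    - now contradiction Hne. }
  apply Hfar. exists x. split; [exact Hx|]. rewrite (proj2 (Hd0 x x) eq_refl). exact Hr.
Qed.

Lemma Rpower_pos (x y : R) : 0 < Rpower x y.
Proof. apply exp_pos. Qed.

Lemma Fn_pos (X : Type) rho par p n (f : X -> R) x : 0 < f x -> 0 < Fn X rho par p n f x.
Proof.
  intros Hfx. unfold Fn, Rdiv. apply Rmult_lt_0_compat; [exact Hfx|].
  apply Rinv_0_lt_compat, Rpower_pos.
Qed.

Lemma shift_at_src (X : Type) (f : X -> R) u v al : shift X f u v al u = f u - al.
Proof. unfold shift, Xeq. destruct (excluded_middle_informative (u = u)); congruence. Qed.

Lemma shift_at_dst (X : Type) (f : X -> R) u v al : u <> v -> shift X f u v al v = f v + al.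
Proof.
  intros Huv. unfold shift, Xeq.
  destruct (excluded_middle_informative (v = u)); [congruence|].
  destruct (excluded_middle_informative (v = v)); congruence.
Qed.

Lemma shift_elsewhere (X : Type) (f : X -> R) u v al z :
  z <> u -> z <> v -> shift X f u v al z = f z.
Proof.
  intros Hzu Hzv. unfold shift, Xeq.
  destruct (excluded_middle_informative (z = u)); [congruence|].
  destruct (excluded_middle_informative (z = v)); congruence.
Qed.

Lemma transfer_amount_spec (fu fv Pu Pv c al : R) :
  0 < Pu -> 0 < Pv -> 0 < c -> c * (fv / Pv) < fu / Pu ->
  al = (fu / Pu - c * (fv / Pv)) / (c / Pv + / Pu) ->
  0 < al /\ (fu - al) / Pu = c * ((fv + al) / Pv).
Proof.
  intros HPu HPv Hc Hgt ->.
  assert (Hden : 0 < c / Pv + / Pu).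
  { assert (0 < c / Pv) by (unfold Rdiv; apply Rmult_lt_0_compat; [|apply Rinv_0_lt_compat]; lra).
    assert (0 < / Pu) by (apply Rinv_0_lt_compat; lra). lra. }
  split.
  - unfold Rdiv at 1. apply Rmult_lt_0_compat; [lra | apply Rinv_0_lt_compat; exact Hden].
  - field. repeat split; try lra. nra.
Qed.

Section HyperbolicFilling.
Variables (X : Type) (d : X -> X -> R) (a lam : R).
Variables (Xs : nat -> X -> Prop) (x0 : X) (par : X -> nat -> X).
Hypothesis Hmet : is_metric X d.
Hypothesis Hla : lam <= a.
Hypothesis Hl6 : 6 <= lam.
Hypothesis Hfill : hyperbolic_filling X d a Xs x0 par.

Lemma hedge_sym n x y : hedge X d a lam Xs n x y -> hedge X d a lam Xs n y x.
Proof.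
  intros [Hx [Hy [Hxy [z [Hxz Hyz]]]]].
  repeat split; auto. exists z. split; assumption.
Qed.

Lemma dist_parent_lt k x : Xs (S k) x -> d x (par x (S k)) < / a ^ k.
Proof.
  intros Hx. destruct Hfill as [_ [_ [Hsep Hpar]]].
  assert (Hr : 0 < / a ^ k) by (apply Rinv_0_lt_compat, pow_lt; lra).
  destruct (maximal_separated_dense X d _ _ x Hmet Hr (Hsep k)) as [z [Hz Hxz]].
  pose proof (proj2 (Hpar k x Hx) z Hz). lra.
Qed.

Lemma hedge_parents k y1 m y2 :
  hedge X d a lam Xs (S k) y1 m -> hedge X d a lam Xs (S k) m y2 ->
  par y1 (S k) = par y2 (S k) \/
  hedge X d a lam Xs k (par y1 (S k)) (par y2 (S k)).
Proof.
  intros [Hy1 [_ [_ [z1 [Hy1z1 Hmz1]]]]] [_ [Hy2 [_ [z2 [Hmz2 Hy2z2]]]]].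
  destruct (classic (par y1 (S k) = par y2 (S k))) as [Heq|Hne]; [now left|right].
  pose proof (dist_parent_lt k y1 Hy1). pose proof (dist_parent_lt k y2 Hy2).
  destruct Hmet as [_ [Hd0 [Hsym Htri]]]. destruct Hfill as [_ [_ [_ Hpar]]].
  unfold ball in *.
  set (p1 := par y1 (S k)) in *. set (p2 := par y2 (S k)) in *.
  assert (Hak : 0 < a ^ k) by (apply pow_lt; lra).
  assert (Hstep : lam / a ^ S k <= / a ^ k).
  { simpl. unfold Rdiv. rewrite Rinv_mult.
    apply (Rmult_le_reg_l (a * a ^ k)); [nra|]. field_simplify; lra. }
  assert (Hsix : 6 * / a ^ k <= lam / a ^ k).
  { unfold Rdiv. apply Rmult_le_compat_r; [left; apply Rinv_0_lt_compat|]; lra. }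
  pose proof (Htri p1 y1 p2). pose proof (Htri y1 y2 p2).
  pose proof (Htri y1 z1 y2). pose proof (Htri z1 m y2). pose proof (Htri m z2 y2).
  rewrite (Hsym p1 y1), (Hsym z1 m), (Hsym z2 y2) in *.
  repeat split; [apply Hpar; assumption | apply Hpar; assumption | exact Hne |].
  (* d(p1, p2) < 2 / a^k + 4 lam / a^(k+1) <= 6 / a^k <= lam / a^k *)
  exists p1. unfold ball. rewrite (Hsym p2 p1), (proj2 (Hd0 p1 p1) eq_refl). split.
  - unfold Rdiv. apply Rmult_lt_0_compat; [lra|]. apply Rinv_0_lt_compat; exact Hak.
  - lra.
Qed.

Section LevelRatios.
Variables (rho : X -> nat -> R) (p C : R) (k : nat) (mu f0 : X -> R).
Hypothesis HC : 1 < C.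
Hypothesis mu_pos : forall x, Xs k x -> 0 < mu x.
Hypothesis f0_pos : forall x, Xs (S k) x -> 0 < f0 x.
Hypothesis mu_bal : balanced X d a lam Xs par rho p C k mu.
Hypothesis Hcomp : compatible X Xs rho par p C k mu f0.

Lemma Fn_two_step_le y1 m y2 :
  hedge X d a lam Xs (S k) y1 m -> hedge X d a lam Xs (S k) m y2 ->
  Fn X rho par p (S k) f0 y1 <= C ^ 3 * Fn X rho par p (S k) f0 y2.
Proof.
  intros H1m Hm2.
  assert (Hy1 : Xs (S k) y1) by apply H1m.
  assert (Hy2 : Xs (S k) y2) by apply Hm2.
  set (M := Fn X rho par p k mu).
  set (p1 := par y1 (S k)). set (p2 := par y2 (S k)).
  assert (Hup : Fn X rho par p (S k) f0 y1 <= C * M p1) by apply (Hcomp y1 Hy1).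
  assert (Hdown : M p2 <= Fn X rho par p (S k) f0 y2) by apply (Hcomp y2 Hy2).
  assert (HM2 : 0 < M p2).
  { apply Fn_pos, mu_pos. apply Hfill. exact Hy2. }
  assert (Hpar : M p1 <= C ^ 2 * M p2).
  { destruct (hedge_parents k y1 m y2 H1m Hm2) as [Heq|Hh].
    - unfold p1. rewrite Heq. fold p2.
      assert (1 <= C ^ 2) by (simpl; nra). nra.
    - apply mu_bal; [apply Hh | apply Hh |]. split.
      + intros Heq. injection Heq. apply Hh.
      + simpl. right; right. split; [reflexivity | exact Hh]. }
  assert (C * M p1 <= C * (C ^ 2 * M p2)) by (apply Rmult_le_compat_l; lra).
  assert (C * (C ^ 2 * M p2) <= C ^ 3 * Fn X rho par p (S k) f0 y2).
  { replace (C * (C ^ 2 * M p2)) with (C ^ 3 * M p2) by ring.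
    apply Rmult_le_compat_l; [simpl; nra | exact Hdown]. }
  lra.
Qed.

Lemma shift_preserves_balanced u v w w' :
  hedge X d a lam Xs (S k) u v ->
  C ^ 2 * Fn X rho par p (S k) f0 v < Fn X rho par p (S k) f0 u ->
  hedge X d a lam Xs (S k) w w' ->
  balanced_on X rho par p C (S k) f0 w w' ->
  balanced_on X rho par p C (S k)
    (shift X f0 u v
       ((Fn X rho par p (S k) f0 u - C ^ 2 * Fn X rho par p (S k) f0 v) /
        (C ^ 2 / Rpower (pi X rho par v (S k)) p + / Rpower (pi X rho par u (S k)) p)))
    w w'.
Proof.
  intros Huv Hgt Hww' Hbal.
  set (al := (_ / _)).
  assert (Hne : u <> v) by apply Huv.
  destruct (transfer_amount_spec (f0 u) (f0 v) _ _ (C ^ 2) al (Rpower_pos _ _) (Rpower_pos _ _)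
              ltac:(simpl; nra) Hgt eq_refl) as [Hal Hsplit].
  apply (transfer_preserves_balanced X (hedge X d a lam Xs (S k)) C
           (Fn X rho par p (S k) f0) (Fn X rho par p (S k) (shift X f0 u v al)) u v);
    try assumption.
  - apply hedge_sym.
  - intros x y Hxy. apply Hxy.
  - intros x y Hxy. left. apply Fn_pos, f0_pos, Hxy.
  - apply Fn_two_step_le.
  - unfold Fn. rewrite shift_at_src. unfold Rdiv.
    apply Rmult_le_compat_r; [left; apply Rinv_0_lt_compat, Rpower_pos | lra].
  - unfold Fn. rewrite shift_at_dst by exact Hne. unfold Rdiv.
    apply Rmult_le_compat_r; [left; apply Rinv_0_lt_compat, Rpower_pos | lra].
  - unfold Fn. rewrite shift_at_src, shift_at_dst by exact Hne. exact Hsplit.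
  - intros z Hzu Hzv. unfold Fn. rewrite shift_elsewhere by assumption. reflexivity.
Qed.

End LevelRatios.
End HyperbolicFilling.

Theorem lemma3p13
  (X : Type) (d : X -> X -> R)
  (Hmet : is_metric X d) (Hcpt : metric_compact X d) (Hdbl : doubling X d)
  (Hdiam : diam_eq X d (1 / 2))
  (a lam : R) (Hla : lam <= a) (Hl6 : 6 <= lam)
  (Xs : nat -> X -> Prop) (x0 : X) (par : X -> nat -> X)
  (Hfill : hyperbolic_filling X d a Xs x0 par)
  (rho : X -> nat -> R) (Hrho : forall n x, Xs n x -> 0 < rho x n)
  (em ep p : R) (HH1 : H1 X Xs rho em ep) (HH4 : H4 X Xs rho par p)
  (C : R) (HC : 1 < C) (k : nat) (mu f0 : X -> R)
  (Hmu : pmf X Xs k mu) (Hmub : balanced X d a lam Xs par rho p C k mu)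
  (Hf0 : pmf X Xs (S k) f0) (Hf01 : forall x, Xs (S k) x -> f0 x <= 1)
  (Hcomp : compatible X Xs rho par p C k mu f0)
  (w1 w1' : X) (He : hedge X d a lam Xs (S k) w1 w1')
  (Hunb : ~ balanced_on X rho par p C (S k) f0 w1 w1')
  (w w' : X) (He' : hedge X d a lam Xs (S k) w w')
  (Hbal : balanced_on X rho par p C (S k) f0 w w') :
  balanced_on X rho par p C (S k) (balance X rho par p C (S k) w1 w1' f0) w w'.
Proof.
  pose proof (shift_preserves_balanced X d a lam Xs x0 par Hmet Hla Hl6 Hfill
                rho p C k mu f0 HC (proj1 Hmu) (proj1 Hf0) Hmub Hcomp) as Hshift.
  unfold balance; cbv zeta.
  destruct (Rlt_dec _ _) as [Hgt|_].
  { exact (Hshift w1 w1' w w' He Hgt He' Hbal). }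
  destruct (Rlt_dec _ _) as [Hgt|_].
  { exact (Hshift w1' w1 w w' (hedge_sym X d a lam Xs (S k) w1 w1' He) Hgt He' Hbal). }
  exact Hbal.
Qed.
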